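(* Fix $0<r_1,r_2\le 1$ and $n\ge 1$. Consider a cycle $A\to B^1\to B^2\to\cdots\to B^n\to A$ of $n+1$ distinct pools with positive reserves: pool $1$ is $A\rightleftharpoons B^1$ with reserves $a_1$ of $A$ and $b^1_1$ of $B^1$; for $2\le k\le n$, pool $k$ is $B^{k-1}\rightleftharpoons B^k$ with reserves $b^{k-1}_k$ of $B^{k-1}$ and $b^k_k$ of $B^k$; pool $n+1$ is $B^n\rightleftharpoons A$ with reserves $b^n_{n+1}$ of $B^n$ and $a_{n+1}$ of $A$. Define the arbitrage index $$I=\frac{a_{n+1}\, b^1_1\, b^2_2\cdots b^n_n}{a_1\, b^1_2\, b^2_3\cdots b^n_{n+1}}.$$ For $\delta\ge 0$ let $U_{\rightarrow}(\delta)$ be the net gain (amount of $A$ received minus $\delta$) from swapping $\delta$ of $A$ sequentially through the pools in the order $A\to B^1\to\cdots\to B^n\to A$, and $U_{\leftarrow}(\delta)$ the net gain from swapping $\delta$ of $A$ through the same pools in the reversed order $A\to B^n\to\cdots\to B^1\to A$. If $I>\dfrac{1}{r_1^{n+1}r_2^{n+1}}$, then there exists $\delta>0$ with $U_{\rightarrow}(\delta)>0$, and $U_{\leftarrow}(\delta)<0$ for every $\delta>0$.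
   Context: Constant-product automated market maker with fees (Uniswap V2 model). A pool between tokens $X$ and $Y$ holds reserves $x>0$ of $X$ and $y>0$ of $Y$. Swapping an input amount $\delta\ge 0$ of $X$ into the pool returns $\mathrm{out}_{x,y}(\delta)=\dfrac{r_1 r_2\, y\,\delta}{x+r_1\delta}$ of $Y$ (and swapping in $Y$ is symmetric with the roles of $x,y$ exchanged), where $r_1,r_2\in(0,1]$ are fixed fee parameters (Uniswap V2: $r_1=0.997$, $r_2=1$). In a sequential (cyclic) trade, the entire output of each swap is the input of the next swap, and each pool is used once with its initial reserves. *)

From mathcomp Require Import all_boot all_order all_algebra.
Set Implicit Arguments. Unset Strict Implicit. Unset Printing Implicit Defensive.
Import Order.TTheory GRing.Theory Num.Theory.
Local Open Scope ring_scope.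

(* out_{x,y}(d) = r1 r2 y d / (x + r1 d): swap d of the token with reserve x
   into a pool with reserves (x, y); returns an amount of the other token. *)
Definition swap_out {R : realFieldType} (r1 r2 x y d : R) : R :=
  r1 * r2 * y * d / (x + r1 * d).

(* The cycle has n+1 pools, indexed k = 0..n (pool k here = pool k+1 of the
   paper).  In the forward direction A -> B^1 -> ... -> B^n -> A, pool k has
   reserve x k of its input token and y k of its output token:
     x 0 = a_1,           y 0 = b^1_1,
     x k = b^k_{k+1},     y k = b^{k+1}_{k+1}   (1 <= k <= n-1),
     x n = b^n_{n+1},     y n = a_{n+1}. *)

Definition fwd_out {R : realFieldType} (r1 r2 : R) (n : nat) (x y : nat -> R)
  (d : R) : R :=
  foldl (fun d k => swap_out r1 r2 (x k) (y k) d) d (iota 0 n.+1).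

Definition bwd_out {R : realFieldType} (r1 r2 : R) (n : nat) (x y : nat -> R)
  (d : R) : R :=
  foldl (fun d k => swap_out r1 r2 (y k) (x k) d) d (rev (iota 0 n.+1)).

Definition U_fwd {R : realFieldType} (r1 r2 : R) n (x y : nat -> R) (d : R) : R :=
  fwd_out r1 r2 n x y d - d.
Definition U_bwd {R : realFieldType} (r1 r2 : R) n (x y : nat -> R) (d : R) : R :=
  bwd_out r1 r2 n x y d - d.

Definition arb_index {R : realFieldType} n (x y : nat -> R) : R :=
  (\prod_(k < n.+1) y k) / (\prod_(k < n.+1) x k).

From mathcomp Require Import all_boot all_order all_algebra.
From mathcomp Require Import ring lra.
Import Order.TTheory GRing.Theory Num.Theory.
Local Open Scope ring_scope.

(* A single swap  d |-> r1 r2 y d / (x + r1 d)  is a linear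
   fractional map  d |-> G d / (B + C d)  with G, B > 0 and C >= 0, and this
   family is closed under composition, multiplying the "gains" G and the
   "bases" B.  Hence a whole cycle of swaps is such a map, with
     G = (r1 r2)^(n+1) * prod y,   B = prod x   (forward direction),
     G = (r1 r2)^(n+1) * prod x,   B = prod y   (backward direction).
   A map  G d / (B + C d)  beats the identity for small d > 0 iff G > B, and
   stays below the identity for all d > 0 as soon as G < B.  Writing
   t = (r1 r2)^(n+1) <= 1, the hypothesis on the arbitrage index says
   prod x < t prod y, which gives G > B forward, and backward
   t prod x < t^2 prod y <= prod y, i.e. G < B. *)

Definition lin_frac {R : realFieldType} (G B C d : R) : R := G * d / (B + C * d).

Section LinearFractional.
Context {R : realFieldType}.
Implicit Types G B C d : R.

Lemma swap_out_lin_frac (r1 r2 x y d : R) :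
  swap_out r1 r2 x y d = lin_frac (r1 * r2 * y) x r1 d.
Proof. by rewrite /swap_out /lin_frac. Qed.

Lemma lin_frac_den_gt0 B C d : 0 < B -> 0 <= C -> 0 <= d -> 0 < B + C * d.
Proof. by move=> B0 C0 d0; apply: ltr_wpDr; rewrite ?mulr_ge0. Qed.

Lemma lin_frac_ge0 G B C d :
  0 <= G -> 0 < B -> 0 <= C -> 0 <= d -> 0 <= lin_frac G B C d.
Proof.
move=> G0 B0 C0 d0; rewrite /lin_frac.
by rewrite divr_ge0 ?mulr_ge0 // ltW // lin_frac_den_gt0.
Qed.

Lemma lin_frac_comp G1 B1 C1 G2 B2 C2 d :
  0 <= G1 -> 0 < B1 -> 0 <= C1 -> 0 < B2 -> 0 <= C2 -> 0 <= d ->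
  lin_frac G2 B2 C2 (lin_frac G1 B1 C1 d)
  = lin_frac (G2 * G1) (B2 * B1) (B2 * C1 + C2 * G1) d.
Proof.
move=> G10 B10 C10 B20 C20 d0.
have den1 : 0 < B1 + C1 * d by rewrite lin_frac_den_gt0.
have den : 0 < B2 * B1 + (B2 * C1 + C2 * G1) * d.
  by rewrite lin_frac_den_gt0 ?mulr_gt0 ?addr_ge0 ?mulr_ge0 // ltW.
rewrite /lin_frac; field.
by rewrite (gt_eqF den) (gt_eqF den1).
Qed.

Lemma lin_frac_gain {G B C} :
  0 < B -> B < G -> 0 <= C -> exists2 d, 0 < d & d < lin_frac G B C d.
Proof.
move=> B0 BG C0; have C1 : 0 < C + 1 by lra.
pose d := (G - B) / (C + 1).
have d0 : 0 < d by rewrite divr_gt0 // subr_gt0.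
have dC : d * (C + 1) = G - B by rewrite /d mulfVK // gt_eqF.
have den : 0 < B + C * d by rewrite lin_frac_den_gt0 // ltW.
have margin : G * d - d * (B + C * d) = d * d.
  by rewrite -[G](subrK B) -dC; ring.
by exists d => //; rewrite /lin_frac ltr_pdivlMr // -subr_gt0 margin mulr_gt0.
Qed.

Lemma lin_frac_loss {G B C d} :
  0 < B -> G < B -> 0 <= C -> 0 < d -> lin_frac G B C d < d.
Proof.
move=> B0 GB C0 d0.
have den : 0 < B + C * d by rewrite lin_frac_den_gt0 // ltW.
rewrite /lin_frac ltr_pdivrMr // [d * _]mulrC ltr_pM2r //.
by rewrite (lt_le_trans GB) // lerDl mulr_ge0 // ltW.
Qed.

Lemma foldl_swap_lin_frac {r1 r2 : R} {p q : nat -> R} {s : seq nat} :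
  0 < r1 -> 0 < r2 -> (forall k, k \in s -> 0 < p k /\ 0 < q k) ->
  exists2 C, 0 <= C & forall d, 0 <= d ->
    foldl (fun d k => swap_out r1 r2 (p k) (q k) d) d s
    = lin_frac (\prod_(k <- s) (r1 * r2 * q k)) (\prod_(k <- s) p k) C d.
Proof.
move=> r10 r20; elim: s => [|k s IH] pos_s.
  by exists 0 => // d _; rewrite /lin_frac !big_nil mul0r addr0 divr1 mul1r.
have [pk0 qk0] := pos_s k (mem_head _ _).
have pos_tail j : j \in s -> 0 < p j /\ 0 < q j.
  by move=> js; apply: pos_s; rewrite inE js orbT.
have [C C0 foldE] := IH pos_tail.
have Bs0 : 0 < \prod_(j <- s) p j.
  by rewrite big_seq prodr_gt0 // => j /pos_tail [].
have Gk0 : 0 <= r1 * r2 * q k by rewrite !mulr_ge0 // ltW.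
exists ((\prod_(j <- s) p j) * r1 + C * (r1 * r2 * q k)).
  by rewrite addr_ge0 ?mulr_ge0 // ltW.
move=> d d0 /=.
rewrite swap_out_lin_frac foldE ?lin_frac_ge0 ?(ltW r10) //.
rewrite lin_frac_comp ?(ltW r10) // !big_cons.
by rewrite [_ * (r1 * r2 * q k)]mulrC [_ * p k]mulrC.
Qed.

Lemma prod_iota (F : nat -> R) n :
  \prod_(k <- iota 0 n.+1) F k = \prod_(k < n.+1) F k.
Proof. by rewrite -(big_mkord xpredT) /index_iota subn0. Qed.

Lemma prod_fee_iota (r1 r2 : R) (F : nat -> R) n :
  \prod_(k <- iota 0 n.+1) (r1 * r2 * F k)
  = r1 ^+ n.+1 * r2 ^+ n.+1 * \prod_(k < n.+1) F k.
Proof. by rewrite prod_iota !big_split /= !prodr_const card_ord. Qed.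

End LinearFractional.

Theorem lemma1 (R : realFieldType) (r1 r2 : R) (n : nat) (x y : nat -> R) :
  0 < r1 -> r1 <= 1 -> 0 < r2 -> r2 <= 1 -> (1 <= n)%N ->
  (forall k : nat, (k <= n)%N -> 0 < x k) ->
  (forall k : nat, (k <= n)%N -> 0 < y k) ->
  1 / (r1 ^+ n.+1 * r2 ^+ n.+1) < arb_index n x y ->
  (exists d : R, 0 < d /\ 0 < U_fwd r1 r2 n x y d) /\
  (forall d : R, 0 < d -> U_bwd r1 r2 n x y d < 0).
Proof.
move=> r10 r11 r20 r21 _ x0 y0.
have pos k : k \in iota 0 n.+1 -> 0 < x k /\ 0 < y k.
  by rewrite mem_iota ltnS => /andP[_ kn]; split; [apply: x0 | apply: y0].
have P0 : 0 < \prod_(k < n.+1) y k.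
  by rewrite prodr_gt0 // => k _; apply: y0; rewrite -ltnS.
have Q0 : 0 < \prod_(k < n.+1) x k.
  by rewrite prodr_gt0 // => k _; apply: x0; rewrite -ltnS.
set t := r1 ^+ n.+1 * r2 ^+ n.+1.
have t0 : 0 < t by rewrite mulr_gt0 ?exprn_gt0.
have t1 : t <= 1.
  by rewrite mulr_ile1 ?exprn_ge0 ?exprn_ile1 ?(ltW r10) ?(ltW r20).
rewrite /arb_index ltr_pdivlMr // mul1r ltr_pdivrMl // => QtP.
split.
- have [C C0 fwdE] := foldl_swap_lin_frac r10 r20 pos.
  rewrite prod_fee_iota prod_iota -/t in fwdE.
  have [d d0 gain] := lin_frac_gain Q0 QtP C0.
  by exists d; rewrite /U_fwd /fwd_out fwdE ?subr_gt0 // ltW.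
- move=> d d0.
  have pos_rev k : k \in rev (iota 0 n.+1) -> 0 < y k /\ 0 < x k.
    by rewrite mem_rev => /pos [].
  have [C C0 bwdE] := foldl_swap_lin_frac r10 r20 pos_rev.
  rewrite !big_rev prod_fee_iota prod_iota -/t in bwdE.
  have tQP : t * \prod_(k < n.+1) x k < \prod_(k < n.+1) y k.
    have tQ : t * \prod_(k < n.+1) x k < t * (t * \prod_(k < n.+1) y k).
      by rewrite ltr_pM2l.
    rewrite (lt_le_trans tQ) // mulrA ler_piMl ?(ltW P0) //.
    by rewrite mulr_ile1 ?(ltW t0).
  by rewrite /U_bwd /bwd_out bwdE ?subr_lt0 ?lin_frac_loss // ltW.
Qed.
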